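(* Let $L\ge1$ be an integer, let $K_1,\dots,K_L\subseteq[N]$ be pairwise disjoint, $x_0=\sum_{i=1}^L i\,\mathbb{1}_{K_i}$, $K=\bigcup_{i=1}^LK_i$, and $A\in\mathbb{R}^{m\times N}$. The following are equivalent: (i) $\ker(A)\cap N^+\cap H_{K_L,K^C}=\{0\}$; (ii) $x_0$ is the unique solution of $\min\|x\|_1$ subject to $Ax=Ax_0$ and $x\in[0,L]^N$.
   Context: $\mathbb{1}_S$ has entries $1$ on $S$, $0$ elsewhere; $K^C=[N]\setminus K$. $N^+=\{w\in\mathbb{R}^N:\sum_{i=1}^Nw_i\le0\}$, $H_{K_L,K^C}=\{w\in\mathbb{R}^N: w_i\le0\text{ for } i\in K_L,\ w_i\ge0\text{ for } i\in K^C\}$. ''Unique solution'' means unique minimizer. *)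

From mathcomp Require Import all_boot all_order all_algebra.
From mathcomp Require Import all_classical all_reals.
Set Implicit Arguments. Unset Strict Implicit. Unset Printing Implicit Defensive.
Import Order.TTheory GRing.Theory Num.Theory.
Local Open Scope ring_scope.

Definition l1norm (R : realType) (N : nat) (x : 'cV[R]_N) : R :=
  \sum_(j < N) `|x j 0|.

Definition Nplus (R : realType) (N : nat) : pred 'cV[R]_N :=
  fun w => \sum_(j < N) w j 0 <= 0.

Definition Hcone (R : realType) (N : nat) (KL KC : {set 'I_N}) : pred 'cV[R]_N :=
  fun w => [forall j, (j \in KL) ==> (w j 0 <= 0)] &&
           [forall j, (j \in KC) ==> (0 <= w j 0)].

Definition x0vec (R : realType) (N L : nat) (K : nat -> {set 'I_N}) : 'cV[R]_N :=
  \col_j \sum_(1 <= i < L.+1) (i%:R * (j \in K i)%:R).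

Definition Kunion (N L : nat) (K : nat -> {set 'I_N}) : {set 'I_N} :=
  \bigcup_(1 <= i < L.+1) K i.

Definition feasible (R : realType) (m N L : nat) (A : 'M[R]_(m, N))
  (b : 'cV[R]_m) (x : 'cV[R]_N) : Prop :=
  A *m x = b /\ forall j, 0 <= x j 0 <= L%:R.

Definition unique_l1_min (R : realType) (m N L : nat) (A : 'M[R]_(m, N))
  (b : 'cV[R]_m) (x : 'cV[R]_N) : Prop :=
  feasible L A b x /\
  forall y, feasible L A b y -> y != x -> l1norm x < l1norm y.

From mathcomp Require Import all_boot all_order all_algebra.
From mathcomp Require Import all_classical all_reals.
From mathcomp Require Import lra.
Set Implicit Arguments. Unset Strict Implicit. Unset Printing Implicit Defensive.
Import Order.TTheory GRing.Theory Num.Theory.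
Local Open Scope ring_scope.

(* The coordinates of x0 lie in [0, L]; they equal L exactly on K_L and 0
   exactly off K.  If y is feasible, w = y - x0 lies in ker A and in
   H_{K_L, K^C}, and since y and x0 are nonnegative, sum_i w_i is
   ||y||_1 - ||x0||_1; so ||y||_1 <= ||x0||_1 puts w in N^+.  Conversely, the
   coordinates of x0 outside K_L and K^C are strictly inside (0, L), so a
   nonzero w in the intersection can be added to x0 with a small positive
   factor without leaving the box, which gives a different feasible point with
   no larger l1 norm.  Only these two active sets of x0 matter, so the argument
   works for any point of the box. *)

Section BoxL1.

Variables (R : realType) (N L : nat).
Hypothesis L_gt0 : (0 < L)%N.

Implicit Types (x y w : 'cV[R]_N) (a e : R).

Definition in_box x := forall j, 0 <= x j 0 <= L%:R.

Definition active_upper x : {set 'I_N} := [set j | x j 0 == L%:R].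
Definition active_lower x : {set 'I_N} := [set j | x j 0 == 0].

Lemma HconeP (KL KC : {set 'I_N}) w :
  reflect ((forall j, j \in KL -> w j 0 <= 0) /\ (forall j, j \in KC -> 0 <= w j 0))
          (Hcone KL KC w).
Proof.
apply: (iffP andP) => [[/forallP HL /forallP HC]|[HL HC]].
  by split=> j; [move/implyP: (HL j) | move/implyP: (HC j)].
by split; apply/forallP => j; apply/implyP; [apply: HL | apply: HC].
Qed.

Lemma NplusZ t w : 0 <= t -> Nplus w -> Nplus (t *: w).
Proof.
move=> t_ge0 Nw; rewrite /Nplus (eq_bigr (fun j => t * w j 0)) => [|j _]; last by rewrite mxE.
by rewrite -mulr_sumr mulr_ge0_le0.
Qed.

Lemma l1norm_ge0E x : (forall j, 0 <= x j 0) -> l1norm x = \sum_(j < N) x j 0.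
Proof. by move=> x_ge0; apply: eq_bigr => j _; rewrite ger0_norm. Qed.

Lemma NplusB_l1norm x y : in_box x -> in_box y ->
  Nplus (y - x) = (l1norm y <= l1norm x).
Proof.
move=> box_x box_y.
have box_ge0 z : in_box z -> forall j, 0 <= z j 0 by move=> box_z j; case/andP: (box_z j).
have [x_ge0 y_ge0] := (box_ge0 _ box_x, box_ge0 _ box_y).
rewrite !l1norm_ge0E //.
rewrite /Nplus (eq_bigr (fun j => y j 0 - x j 0)) => [|j _]; last by rewrite !mxE.
by rewrite sumrB subr_le0.
Qed.

Lemma Hcone_active_subr x y : in_box y ->
  Hcone (active_upper x) (active_lower x) (y - x).
Proof.
move=> box_y; apply/HconeP; split=> j; rewrite inE => /eqP xj; rewrite !mxE xj.
  by rewrite subr_le0; case/andP: (box_y j).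
by rewrite subr0; case/andP: (box_y j).
Qed.

(* Distance from [a] to the boundary of [0, L]; on the boundary, where only
   moves into the box are allowed, [L] instead. *)
Definition box_slack a : R :=
  if (a == 0) || (a == L%:R) then L%:R else Num.min a (L%:R - a).

Lemma box_slack_gt0 a : 0 <= a <= L%:R -> 0 < box_slack a.
Proof.
have L_pos : (0 : R) < L%:R by rewrite ltr0n.
rewrite /box_slack => /andP[a_ge0 a_leL].
case: ifP => [//|/norP[a_neq0 a_neqL]].
by rewrite lt_min subr_gt0 !lt_def a_neq0 a_ge0 eq_sym a_neqL a_leL.
Qed.

Lemma box_slack_addr_in_box a e : 0 <= a <= L%:R ->
  (a = L%:R -> e <= 0) -> (a = 0 -> 0 <= e) -> `|e| <= box_slack a ->
  0 <= a + e <= L%:R.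
Proof.
move=> /andP[a_ge0 a_leL] upper lower; rewrite /box_slack.
case: eqP => [a0|_]; first by rewrite a0 add0r => /ler_normlP[]; move: (lower a0); lra.
case: eqP => [aL|_] /=; first by rewrite aL => /ler_normlP[]; move: (upper aL); lra.
by rewrite le_min => /andP[] /ler_normlP[? ?] /ler_normlP[? ?]; lra.
Qed.

Lemma exists_small_scale w d : 0 < d ->
  exists2 t, 0 < t & forall j, `|t * w j 0| <= d.
Proof.
move=> d_gt0; set s := \sum_(j < N) `|w j 0|.
have s_ge0 : 0 <= s by apply: sumr_ge0.
exists (d / (1 + s)) => [|j]; first by rewrite divr_gt0 //; lra.
have wj_le : `|w j 0| <= s by rewrite /s (bigD1 j) //= lerDl sumr_ge0.
rewrite normrM ger0_norm; last by rewrite divr_ge0 //; lra.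
rewrite mulrAC ler_pdivrMr; last by lra.
by rewrite ler_pM2l //; lra.
Qed.

Lemma exists_step_in_box x w : in_box x ->
  Hcone (active_upper x) (active_lower x) w ->
  exists2 t, 0 < t & in_box (x + t *: w).
Proof.
move=> box_x /HconeP[w_upper w_lower].
set d := \big[Num.min/1]_j box_slack (x j 0).
have d_gt0 : 0 < d by apply: lt_bigmin => // j _; apply: box_slack_gt0.
have [t t_gt0 tw_small] := exists_small_scale w d_gt0.
exists t => // j; rewrite !mxE; apply: box_slack_addr_in_box => //.
- move=> xj; apply: mulr_ge0_le0; first exact: ltW.
  by apply: w_upper; rewrite inE xj.
- move=> xj; apply: mulr_ge0; first exact: ltW.
  by apply: w_lower; rewrite inE xj.
- exact: le_trans (tw_small j) (bigmin_le _ _ _).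
Qed.

Variables (m : nat) (A : 'M[R]_(m, N)).

Lemma unique_l1_minP x : in_box x ->
  (forall w, A *m w = 0 -> Nplus w ->
     Hcone (active_upper x) (active_lower x) w -> w = 0)
  <-> unique_l1_min L A (A *m x) x.
Proof.
move=> box_x; split=> [nullspace|[_ x_min] w Aw0 Nw Hw].
  split=> [//|y [Ay box_y] y_neq_x]; rewrite ltNge; apply/negP => y_le_x.
  rewrite -NplusB_l1norm // in y_le_x.
  have Aw : A *m (y - x) = 0 by rewrite mulmxBr Ay subrr.
  have /eqP := nullspace _ Aw y_le_x (Hcone_active_subr x box_y).
  by rewrite subr_eq0 (negbTE y_neq_x).
apply/eqP; apply: contraT => w_neq0.
have [t t_gt0 box_y] := exists_step_in_box box_x Hw.
have y_feas : feasible L A (A *m x) (x + t *: w).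
  by split; rewrite // mulmxDr -scalemxAr Aw0 scaler0 addr0.
have y_neq_x : x + t *: w != x.
  by rewrite -subr_eq0 addrC addKr scaler_eq0 negb_or gt_eqF.
have := x_min _ y_feas y_neq_x.
by rewrite ltNge -NplusB_l1norm // addrC addKr (NplusZ (ltW t_gt0) Nw).
Qed.

End BoxL1.

Section X0vec.

Variables (R : realType) (N L : nat) (K : nat -> {set 'I_N}).
Hypothesis L_gt0 : (0 < L)%N.
Hypothesis K_disjoint : forall i k, (1 <= i <= L)%N -> (1 <= k <= L)%N -> i != k ->
  [disjoint K i & K k].

Lemma KunionP j : reflect (exists2 i, (1 <= i <= L)%N & j \in K i) (j \in Kunion L K).
Proof.
apply: (iffP idP) => [|[i iL jKi]].
  rewrite /Kunion big_seq; elim/big_rec: _ => [|i S iL IH]; first by rewrite inE.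
  by rewrite inE => /orP[jKi|/IH //]; exists i; rewrite // -(mem_index_iota 1 L.+1).
by rewrite /Kunion (bigD1_seq i) ?mem_index_iota ?iota_uniq //= inE jKi.
Qed.

Lemma x0vec_K i j : (1 <= i <= L)%N -> j \in K i -> x0vec R L K j 0 = i%:R.
Proof.
move=> iL jKi; rewrite mxE (bigD1_seq i) ?mem_index_iota ?iota_uniq //=.
rewrite jKi mulr1 big1_seq ?addr0 // => k /andP[k_neq_i]; rewrite mem_index_iota => kL.
by rewrite (disjointFr (K_disjoint iL kL _) jKi) ?mulr0 // eq_sym.
Qed.

Lemma x0vec_notin_Kunion j : j \notin Kunion L K -> x0vec R L K j 0 = 0.
Proof.
move=> jK; rewrite mxE big1_seq // => k; rewrite mem_index_iota => kL.
have [jKk|_] := boolP (j \in K k); last by rewrite mulr0.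
by case/negP: jK; apply/KunionP; exists k.
Qed.

Lemma x0vec_in_box : in_box L (x0vec R L K).
Proof.
move=> j; have [/KunionP[i /[dup] iL /andP[_ i_leL] /(x0vec_K iL) ->]|] :=
  boolP (j \in Kunion L K); first by rewrite ler0n ler_nat.
by move/x0vec_notin_Kunion ->; rewrite lexx ler0n.
Qed.

Lemma active_upper_x0vec : active_upper L (x0vec R L K) = K L.
Proof.
have LL : (1 <= L <= L)%N by rewrite L_gt0 leqnn.
apply/setP => j; rewrite inE; apply/eqP/idP => [|/(x0vec_K LL) //].
have [/KunionP[i iL /[dup] jKi /(x0vec_K iL) ->]|/x0vec_notin_Kunion ->] :=
  boolP (j \in Kunion L K).
  by move/eqP; rewrite eqr_nat => /eqP <-.
by move/esym/eqP; rewrite pnatr_eq0 (gtn_eqF L_gt0).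
Qed.

Lemma active_lower_x0vec : active_lower (x0vec R L K) = ~: Kunion L K.
Proof.
apply/setP => j; rewrite !inE; apply/eqP/idP => [|/x0vec_notin_Kunion //].
have [/KunionP[i /[dup] iL /andP[i_gt0 _] /(x0vec_K iL) ->]|//] :=
  boolP (j \in Kunion L K).
by move/eqP; rewrite pnatr_eq0 (gtn_eqF i_gt0).
Qed.

End X0vec.

Theorem theorem4p2 (R : realType) (m N L : nat) (K : nat -> {set 'I_N})
  (A : 'M[R]_(m, N)) :
  (1 <= L)%N ->
  (forall i k, (1 <= i <= L)%N -> (1 <= k <= L)%N -> i != k ->
     [disjoint K i & K k]) ->
  ((forall w : 'cV[R]_N, A *m w = 0 -> Nplus w ->
      Hcone (K L) (~: Kunion L K) w -> w = 0)
   <->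
   unique_l1_min L A (A *m x0vec R L K) (x0vec R L K)).
Proof.
move=> L_gt0 K_disjoint.
rewrite -(active_upper_x0vec R L_gt0 K_disjoint) -(active_lower_x0vec R K_disjoint).
exact (unique_l1_minP L_gt0 A (x0vec_in_box R K_disjoint)).
Qed.
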